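(* Let $G$ be a graph, $\varphi$ a $4$-colouring of $G$, and $v$ a vertex of $G$ of degree $3$ that is $\varphi$-frozen. Then every neighbour of $v$ is $\varphi$-frozen.
   Context: Colourings are proper $4$-colourings (colours $\{1,2,3,4\}$); a recolouring sequence is a sequence of proper $4$-colourings in which consecutive ones differ on exactly one vertex. A vertex $v$ is $\varphi$-frozen if $\gamma(v)=\varphi(v)$ for every $4$-colouring $\gamma$ obtainable from $\varphi$ by a recolouring sequence. *)

From mathcomp Require Import all_boot.
Set Implicit Arguments. Unset Strict Implicit. Unset Printing Implicit Defensive.

(* A finite simple graph: vertex type T (finType), adjacency e : rel T,
   symmetric and irreflexive.  Colours {1,2,3,4} are encoded as 'I_4. *)

Definition colouring (T : finType) := {ffun T -> 'I_4}.

Definition proper_col (T : finType) (e : rel T) (c : colouring T) : bool :=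
  [forall x, forall y, e x y ==> (c x != c y)].

Definition recolour_step (T : finType) (e : rel T) : rel (colouring T) :=
  fun a b => [&& proper_col e a, proper_col e b & #|[set x | a x != b x]| == 1].

Definition reachable (T : finType) (e : rel T) (phi gamma : colouring T) : Prop :=
  exists s : seq (colouring T), path (recolour_step e) phi s /\ last phi s = gamma.

Definition frozen (T : finType) (e : rel T) (phi : colouring T) (v : T) : Prop :=
  forall gamma, reachable e phi gamma -> gamma v = phi v.

Definition degree (T : finType) (e : rel T) (v : T) : nat := #|[set u | e v u]|.

From mathcomp Require Import all_boot.

Set Implicit Arguments.
Unset Strict Implicit.
Unset Printing Implicit Defensive.

(* If some colour were missing from the closed neighbourhood N[v] in a
   colouring reachable from phi, v could be recoloured with it; so, v being
   frozen, every reachable colouring maps the four vertices of N[v] onto the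
   four colours, hence bijectively.  A recolouring step changes a single
   vertex, and a bijection of N[v] onto the colours is determined by its
   values on all but one vertex of N[v]; so no step ever changes a colour on
   N[v]. *)

Definition closed_nbhd (T : finType) (e : rel T) (v : T) : {set T} :=
  v |: [set u | e v u].

Definition recolour (T : finType) (g : colouring T) (v : T) (c : 'I_4) : colouring T :=
  [ffun x => if x == v then c else g x].

Lemma onto_agree_off_point (T S : finType) (N : {set T}) (f g : T -> S) (x : T) :
  #|N| = #|S| -> f @: N = setT -> g @: N = setT ->
  (forall y, y != x -> f y = g y) -> {in N, f =1 g}.
Proof.
move=> cardN fN gN fg y; have [-> xN|/fg//] := eqVneq y x.
have /imsetP [z zN gxfz] : g x \in f @: N by rewrite fN inE.
have [zx|zx] := eqVneq z x; first by rewrite gxfz zx.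
have g_inj : {in N &, injective g} by apply/imset_injP; rewrite gN cardsT cardN.
have gxgz : g x = g z by rewrite gxfz fg.
by rewrite (g_inj x z xN zN gxgz) eqxx in zx.
Qed.

Section Recolouring.

Variables (T : finType) (e : rel T).

Lemma reachable_ind (P : colouring T -> Prop) (phi : colouring T) :
  P phi ->
  (forall g g', reachable e phi g -> recolour_step e g g' -> P g -> P g') ->
  forall g, reachable e phi g -> P g.
Proof.
move=> P0 IH g [s [+ <-]]; elim/last_ind: s => [|s g' IHs] //=.
rewrite rcons_path last_rcons => /andP [ps st].
by apply: IH st (IHs ps); exists s.
Qed.

Lemma reachable_rcons (phi g g' : colouring T) :
  reachable e phi g -> recolour_step e g g' -> reachable e phi g'.
Proof.
move=> [s [ps <-]] st; exists (rcons s g'); split; last exact: last_rcons.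
by rewrite rcons_path ps.
Qed.

Lemma reachable_proper (phi g : colouring T) :
  proper_col e phi -> reachable e phi g -> proper_col e g.
Proof.
by move=> pphi; apply: (reachable_ind (P := proper_col e)) => // ? ? _ /and3P [].
Qed.

Lemma recolour_step_single (g g' : colouring T) :
  recolour_step e g g' -> exists x, forall y, y != x -> g y = g' y.
Proof.
case/and3P=> _ _ /cards1P [x gg'x]; exists x => y yx; apply/eqP.
by apply: contraNT yx => gg'y; rewrite -in_set1 -gg'x inE.
Qed.

Hypotheses (e_sym : symmetric e) (e_irr : irreflexive e).

Lemma card_closed_nbhd (v : T) : #|closed_nbhd e v| = (degree e v).+1.
Proof. by rewrite cardsU1 inE e_irr. Qed.

Lemma recolour_step_recolour (g : colouring T) (v : T) (c : 'I_4) :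
  proper_col e g -> c != g v -> (forall u, e v u -> g u != c) ->
  recolour_step e g (recolour g v c).
Proof.
move=> pg cgv nbc; apply/and3P; split=> //.
  apply/forallP => x; apply/forallP => y; apply/implyP => exy; rewrite !ffunE.
  have [xv|xv] := eqVneq x v; have [yv|yv] := eqVneq y v.
  - by rewrite xv yv e_irr in exy.
  - by rewrite eq_sym nbc // -xv.
  - by rewrite nbc // -yv e_sym.
  - exact: (implyP (forallP (forallP pg x) y)).
apply/cards1P; exists v; apply/setP => x; rewrite !inE ffunE.
by have [->|_] := eqVneq x v; rewrite ?eqxx // eq_sym.
Qed.

Lemma frozen_closed_nbhd_onto (phi g : colouring T) (v : T) :
  proper_col e phi -> frozen e phi v -> reachable e phi g ->
  g @: closed_nbhd e v = setT.
Proof.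
move=> pphi frv rg; apply/eqP; rewrite eqEsubset subsetT /=.
apply/subsetP => c _; apply/negPn/negP => miss.
have colour_free x : x \in closed_nbhd e v -> g x != c.
  by move=> xN; apply: contraNN miss => /eqP <-; apply: imset_f.
have cgv : c != g v by rewrite eq_sym colour_free ?setU11.
have st : recolour_step e g (recolour g v c).
  apply: recolour_step_recolour cgv _ => [|u vu]; first exact: reachable_proper pphi rg.
  by rewrite colour_free // !inE vu orbT.
move: (frv _ (reachable_rcons rg st)); rewrite ffunE eqxx -(frv _ rg).
by move/eqP; rewrite (negbTE cgv).
Qed.

End Recolouring.

Theorem lemma7 (T : finType) (e : rel T) (e_sym : symmetric e) (e_irr : irreflexive e)
  (phi : colouring T) (phi_proper : proper_col e phi) (v : T)
  (deg_v : degree e v = 3) (frozen_v : frozen e phi v) :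
  forall u : T, e v u -> frozen e phi u.
Proof.
set N := closed_nbhd e v.
have cardN : #|N| = #|'I_4| by rewrite card_closed_nbhd // deg_v card_ord.
have onto g : reachable e phi g -> g @: N = setT.
  exact: frozen_closed_nbhd_onto.
have fixN g : reachable e phi g -> {in N, g =1 phi}.
  move: g; apply: reachable_ind => // g g' rg st gN y yN.
  have [x agree] := recolour_step_single st.
  by rewrite -gN // (onto_agree_off_point cardN (onto _ rg)
    (onto _ (reachable_rcons rg st)) agree yN).
by move=> u vu g rg; apply: fixN; rewrite // !inE vu orbT.
Qed.
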